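(* Let $H$ be a nontrivial finite group of odd order and let $P$ be a position of $\mathsf{GEN}(H)$ (i.e. a subset of $H$ obtainable from $\emptyset$ by a sequence of legal moves). Let $m=\delta_H(P)$. Then - if $m=0$, then $\operatorname{nim}(P)=0$; - if $m=1$, then $\operatorname{nim}(P)=2$ if $|P|$ is even and $\operatorname{nim}(P)=1$ if $|P|$ is odd; - if $m=2$, then $\operatorname{nim}(P)=2$ if $|P|$ is even and $\operatorname{nim}(P)=0$ if $|P|$ is odd; - if $m\ge 3$, then $\operatorname{nim}(P)=1$ if $|P|$ is even and $\operatorname{nim}(P)=0$ if $|P|$ is odd.
   Context: For a finite group $G$, $\mathsf{GEN}(G)$ is the following impartial two-player game. A position is a set of elements selected so far; the starting position is $\emptyset$. From a position $P$ with $\langle P\rangle\neq G$, the player to move selects some $g\in G\setminus P$, producing the position $P\cup\{g\}$ (these are the options of $P$); a position $P$ with $\langle P\rangle = G$ has no options. The nim-number of a position is defined recursively by $\operatorname{nim}(P)=\operatorname{mex}\{\operatorname{nim}(Q): Q \text{ an option of } P\}$, where $\operatorname{mex}(A)$ is the least nonnegative integer not in $A$. The deficiency $\delta_G(P)$ of a subset $P\subseteq G$ is the minimum size of a subset $Q\subseteq G$ such that $\langle P\cup Q\rangle = G$. *)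

From mathcomp Require Import all_boot all_fingroup.
Set Implicit Arguments. Unset Strict Implicit. Unset Printing Implicit Defensive.
Local Open Scope group_scope.

(* mex of a finite list of naturals: the least n not occurring in s.
   Such an n exists among 0..size s, and since iota 0 k lists 0,1,..,k-1
   in order, the index returned by find equals that least value. *)
Definition mex (s : seq nat) : nat :=
  find (fun n => n \notin s) (iota 0 (size s).+1).

Section Gen.
Variable gT : finGroupType.
Variable G : {group gT}.

Inductive gen_position : {set gT} -> Prop :=
| gen_pos0 : gen_position set0
| gen_posS (P : {set gT}) (g : gT) :
    gen_position P -> <<P>> != (G : {set gT}) -> g \in G -> g \notin P ->
    gen_position (g |: P).

(* Nim-number, computed by fuel-bounded recursion: with fuel k the options of
   P are g |: P for g in G :\: P (when <<P>> <> G), each of which is evaluated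
   with fuel k-1.  Since each move strictly shrinks G :\: P, fuel #|G| suffices
   for every P \subset G. *)
Fixpoint nim_aux (k : nat) (P : {set gT}) : nat :=
  match k with
  | 0 => 0
  | k'.+1 =>
      if <<P>> == (G : {set gT}) then 0
      else mex [seq nim_aux k' (g |: P) | g in G :\: P]
  end.

Definition nim (P : {set gT}) : nat := nim_aux #|G| P.

(* Deficiency: least size of Q \subset G with <<P :|: Q>> = G
   (Q = G always qualifies for P \subset G, so #|G| is a harmless default). *)
Definition deficiency (P : {set gT}) : nat :=
  \big[minn/#|G|]_(Q : {set gT} | (Q \subset G) && (<<P :|: Q>> == (G : {set gT}))) #|Q|.

End Gen.

From mathcomp Require Import all_boot all_fingroup.
From mathcomp Require Import zify.
Set Implicit Arguments. Unset Strict Implicit. Unset Printing Implicit Defensive.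
Local Open Scope group_scope.

(* Adding an element to a nongenerating position P lowers the deficiency by at
   most one, and some move lowers it by exactly one.  When |P| is even, P is
   not a subgroup of the odd-order group H (Lagrange), so some element of
   <<P>> outside P is available; playing it keeps the deficiency.  Hence the
   nim-number depends only on the deficiency m and the parity of |P|, and the
   claimed table is checked by induction on the number of unplayed elements:
   the option values of (m, parity) lie among those of (m-1, flipped parity)
   and (m, flipped parity), the former always occurring and the latter
   occurring when |P| is even. *)

Lemma mex_eq (s : seq nat) n :
  (forall i, (i < n)%N -> i \in s) -> n \notin s -> mex s = n.
Proof.
move=> s_lt_n n_notin_s.
have n_le_size : (n <= size s)%N.
  rewrite -[n](size_iota 0); apply: uniq_leq_size (iota_uniq 0 n) _ => i.
  by rewrite mem_iota add0n => /andP[_ /s_lt_n].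
rewrite /mex; set t := iota 0 (size s).+1.
have has_t : has (fun i => i \notin s) t.
  by apply/hasP; exists n => //; rewrite mem_iota add0n ltnS.
have find_le : (find (fun i => i \notin s) t <= n)%N.
  rewrite leqNgt; apply/negP => /(before_find 0).
  by rewrite nth_iota ?ltnS // add0n n_notin_s.
have := nth_find 0 has_t; rewrite nth_iota ?add0n; last first.
  by rewrite ltnS (leq_trans find_le).
case: ltngtP find_le => // lt_n _; by rewrite s_lt_n.
Qed.

Definition nim_value (m : nat) (odd_card : bool) : nat :=
  (match m with
  | 0 => 0
  | 1 => if odd_card then 1 else 2
  | 2 => if odd_card then 0 else 2
  | _ => if odd_card then 0 else 1
  end)%N.

Lemma mex_nim_value (s : seq nat) m b : (0 < m)%N ->
  nim_value m.-1 (~~ b) \in s -> (~~ b -> nim_value m (~~ b) \in s) ->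
  {subset s <= [:: nim_value m.-1 (~~ b); nim_value m (~~ b)]} ->
  mex s = nim_value m b.
Proof.
case: m => [|[|[|[|m]]]] // _; case: b => /= lo hi sub;
  apply: mex_eq => [[|[|i]] // _|]; rewrite ?lo ?hi //;
  by apply/negP => /sub; rewrite !inE.
Qed.

Section Deficiency.
Variables (gT : finGroupType) (H : {group gT}).
Implicit Types (P Q : {set gT}) (g : gT).

Lemma deficiency_le P Q :
  Q \subset H -> <<P :|: Q>> = H -> (deficiency H P <= #|Q|)%N.
Proof.
move=> sQH genPQ; rewrite /deficiency.
elim: (index_enum _) (mem_index_enum Q) => // R r IHr.
rewrite in_cons big_cons => /predU1P[<-|/IHr]; first by rewrite sQH genPQ eqxx geq_minl.
by case: ifP => // _; apply: leq_trans (geq_minr _ _).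
Qed.

Lemma deficiency_witness P : P \subset H ->
  exists2 Q : {set gT}, (Q \subset H) && (<<P :|: Q>> == H :> {set gT})
           & #|Q| = deficiency H P.
Proof.
move=> sPH; rewrite /deficiency.
apply: (big_ind (fun n => exists2 Q : {set gT}, _ & #|Q| = n)) => [||Q genPQ]; last by exists Q.
- by exists (H : {set gT}); rewrite // subxx (setUidPr sPH) genGid eqxx.
- by move=> _ _ [Q1 ? <-] [Q2 ? <-]; rewrite /minn; case: ifP; [exists Q1|exists Q2].
Qed.

Lemma deficiency_eq0 P :
  P \subset H -> (deficiency H P == 0%N) = (<<P>> == H :> {set gT}).
Proof.
move=> sPH; apply/eqP/eqP => [|genP].
  case: (deficiency_witness sPH) => Q /andP[_ /eqP genPQ] cardQ def0.
  by move: cardQ genPQ; rewrite def0 => /eqP; rewrite cards_eq0 => /eqP->; rewrite setU0.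
apply/eqP; rewrite -leqn0 -(cards0 gT).
by apply: deficiency_le; rewrite ?sub0set ?setU0.
Qed.

Lemma deficiency_setU1_le P g :
  g \in H -> P \subset H -> (deficiency H (g |: P) <= deficiency H P)%N.
Proof.
move=> gH sPH; case: (deficiency_witness sPH) => Q /andP[sQH /eqP genPQ] <-.
apply: deficiency_le => //; apply/eqP; rewrite eqEsubset.
rewrite gen_subG !subUset sub1set gH sPH sQH /= -{1}genPQ.
by rewrite genS // setSU // subsetUr.
Qed.

Lemma deficiency_setU1_ge P g :
  g \in H -> P \subset H -> (deficiency H P <= (deficiency H (g |: P)).+1)%N.
Proof.
move=> gH sPH; have sgPH : g |: P \subset H by rewrite subUset sub1set gH.
case: (deficiency_witness sgPH) => Q /andP[sQH /eqP genPQ] <-.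
apply: (@leq_trans #|g |: Q|); last by rewrite cardsU1; case: (g \notin Q).
apply: deficiency_le; first by rewrite subUset sub1set gH.
by rewrite setUCA setUA.
Qed.

Lemma deficiency_setU1_gen P g :
  g \in <<P>> -> deficiency H (g |: P) = deficiency H P.
Proof.
move=> gP; rewrite /deficiency; apply: eq_bigl => Q.
suff -> : <<(g |: P) :|: Q>> = <<P :|: Q>> by [].
apply/eqP; rewrite eqEsubset (genS (setSU _ (subsetUr _ _))) andbT gen_subG.
by rewrite -setUA subUset sub1set (subsetP (genS (subsetUl P Q))) ?subset_gen.
Qed.

Lemma deficiency_setU1_pred P : P \subset H -> (0 < deficiency H P)%N ->
  exists2 g, g \in H :\: P & deficiency H (g |: P) = (deficiency H P).-1.
Proof.
move=> sPH def_gt0; case: (deficiency_witness sPH) => Q /andP[sQH /eqP genPQ] cardQ.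
have /set0Pn[g gQ] : Q != set0 by rewrite -card_gt0 cardQ.
have gH : g \in H := subsetP sQH g gQ.
have cardQg : #|Q :\ g| = (deficiency H P).-1 by rewrite -cardQ (cardsD1 g Q) gQ.
have le_pred : (deficiency H (g |: P) <= (deficiency H P).-1)%N.
  rewrite -cardQg; apply: deficiency_le; first exact: subset_trans (subD1set Q g) sQH.
  by rewrite -setUA setUCA setD1K.
have gNP : g \notin P.
  apply: contraTN le_pred => gP; rewrite (setUidPr _) ?sub1set //.
  by rewrite -ltnNge prednK.
exists g; first by rewrite inE gNP.
apply/eqP; rewrite eqn_leq le_pred -ltnS prednK //.
exact: deficiency_setU1_ge.
Qed.

Lemma even_gen_notin P : P \subset H -> odd #|H| -> ~~ odd #|P| ->
  exists2 g, g \in H :\: P & g \in <<P>>.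
Proof.
move=> sPH oddH evenP.
have /subsetPn[g genP gNP] : ~~ (<<P>> \subset P).
  apply: contra evenP => sgenP.
  have -> : P = <<P>> by apply/eqP; rewrite eqEsubset subset_gen sgenP.
  by apply: dvdn_odd oddH; apply: cardSg; rewrite gen_subG.
by exists g; rewrite // inE gNP (subsetP _ _ genP) ?gen_subG.
Qed.

Lemma deficiency_setU1 P g : g \in H -> P \subset H ->
  deficiency H (g |: P) \in [:: (deficiency H P).-1; deficiency H P].
Proof.
move=> gH sPH; have := deficiency_setU1_le gH sPH; have := deficiency_setU1_ge gH sPH.
by rewrite !inE; lia.
Qed.

Lemma gen_position_sub P : gen_position H P -> P \subset H.
Proof. by elim=> [|Q g _ sQH _ gH _]; rewrite ?sub0set // subUset sub1set gH. Qed.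

Hypothesis oddH : odd #|H|.

Lemma nim_aux_deficiency k P : P \subset H -> (#|H :\: P| <= k)%N ->
  nim_aux H k P = nim_value (deficiency H P) (odd #|P|).
Proof.
elim: k P => [|k IHk] P sPH.
  rewrite leqn0 cards_eq0 setD_eq0 => sHP.
  suff /eqP-> : deficiency H P == 0%N by [].
  have eqPH : P = H by apply/eqP; rewrite eqEsubset sPH.
  by rewrite deficiency_eq0 // {1}eqPH genGid.
move=> card_le /=; case: ifPn => [genP|NgenP].
  by move: genP; rewrite -deficiency_eq0 // => /eqP->.
have def_gt0 : (0 < deficiency H P)%N by rewrite lt0n deficiency_eq0.
have nim_option g : g \in H :\: P ->
    nim_aux H k (g |: P) = nim_value (deficiency H (g |: P)) (~~ odd #|P|).
  rewrite inE => /andP[gNP gH]; rewrite IHk ?cardsU1 ?gNP //.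
    by rewrite subUset sub1set gH.
  rewrite setUC -setDDl -ltnS (leq_trans _ card_le) //.
  by rewrite [X in (_ <= X)%N](cardsD1 g) inE gNP gH.
apply: mex_nim_value => //.
- case: (deficiency_setU1_pred sPH def_gt0) => g gHP <-.
  by rewrite -nim_option //; apply: image_f.
- case/(even_gen_notin sPH oddH) => g gHP /deficiency_setU1_gen <-.
  by rewrite -nim_option //; apply: image_f.
move=> _ /imageP[g gHP ->]; rewrite nim_option //.
move: gHP; rewrite inE => /andP[_ gH].
by have := deficiency_setU1 gH sPH; rewrite !inE => /orP[]/eqP->; rewrite eqxx ?orbT.
Qed.

End Deficiency.

Theorem mainTheorem3 (gT : finGroupType) (H : {group gT}) (P : {set gT}) :
  H :!=: 1%G -> odd #|H| -> gen_position H P ->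
  [/\ deficiency H P = 0%N -> nim H P = 0%N,
      deficiency H P = 1%N -> nim H P = (if odd #|P| then 1 else 2)%N,
      deficiency H P = 2%N -> nim H P = (if odd #|P| then 0 else 2)%N
    & (3 <= deficiency H P)%N -> nim H P = (if odd #|P| then 0 else 1)%N].
Proof.
move=> _ oddH /gen_position_sub sPH.
have -> : nim H P = nim_value (deficiency H P) (odd #|P|).
  by apply: nim_aux_deficiency; rewrite // subset_leq_card ?subsetDl.
split=> [->|->|->|] //.
by case: (deficiency H P) => [|[|[|d]]].
Qed.
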